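(* For every integer $t>1$ and every integer $d$ with $1\le d\le t$, \[ g\Big(1+\frac{d}{t},t\Big)\ge \frac{(2d+1)t+d^2}{(t+d)(2d+1)}. \]
   Context: Let $\mathbb{F}$ be a finite field and $x_1,\dots,x_p$ a basis of $\mathbb{F}^p$. A $[t\times m,p]$ array code is a $t\times m$ array whose entries (cells) are linear combinations of $x_1,\dots,x_p$; its columns are called servers. It has the $k$-PIR property (is a $[t\times m,p]$ $k$-PIR array code) if for every $i\in\{1,\dots,p\}$ there exist $k$ pairwise disjoint sets $S_1,\dots,S_k$ of columns such that for every $j$ the vector $x_i$ lies in the linear span of all entries of the columns in $S_j$. Its PIR rate is $k/m$. For a rational $s>1$ and a positive integer $t$ with $st$ an integer, $g(s,t)$ is the largest PIR rate $k/m$ of a $[t\times m,st]$ $k$-PIR array code (over all finite fields, all $m$ and all $k$). *)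

From HB Require Import structures.
From mathcomp Require Import all_boot all_order all_algebra all_field.
From mathcomp Require Import classical_sets reals.
Set Implicit Arguments. Unset Strict Implicit. Unset Printing Implicit Defensive.
Import Order.TTheory GRing.Theory Num.Theory.
Local Open Scope ring_scope.

(* A [t x m, p] array code over F: cell (r, j) (row r, column/server j)
   holds a vector of F^p, i.e. the coefficients of a linear combination
   of the basis x_1, ..., x_p (x_i = the i-th unit row vector). *)
Definition array_code (F : fieldType) (t m p : nat) := 'I_t -> 'I_m -> 'rV[F]_p.

Definition cols_span (F : fieldType) (t m p : nat) (C : array_code F t m p)
  (S : {set 'I_m}) : 'M[F]_p :=
  (\sum_(j in S) \sum_(r < t) <<C r j>>)%MS.

Definition basis_vec (F : fieldType) (p : nat) (i : 'I_p) : 'rV[F]_p :=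
  delta_mx 0 i.

Definition is_kPIR (F : fieldType) (t m p k : nat) (C : array_code F t m p) :=
  forall i : 'I_p, exists S : 'I_k -> {set 'I_m},
    (forall a b : 'I_k, a != b -> [disjoint S a & S b]) /\
    (forall a : 'I_k, (basis_vec F i <= cols_span C (S a))%MS).

Definition gPIR (R : realType) (s : rat) (t : nat) : R :=
  sup [set rho : R | exists (F : finFieldType) (p m k : nat)
                            (C : array_code F t m p),
         (p%:Q = s * t%:Q)%R /\ @is_kPIR F t m p k C /\ rho = k%:R / m%:R].

From HB Require Import structures.
From mathcomp Require Import all_boot all_order all_algebra all_field.
From mathcomp Require Import classical_sets reals.
From mathcomp Require Import zify.
Set Implicit Arguments. Unset Strict Implicit. Unset Printing Implicit Defensive.
Import Order.TTheory GRing.Theory Num.Theory.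

(* Index the coordinates by Z_(t+d) and take as servers the pairs (j, S) with
   j in Z_(t+d) and S a d- or (d+1)-subset of {0, ..., 2d-1}; the support of
   (j, S) is j + S, which has |S| elements because 2d <= t + d.  A server stores
   x_l for every l outside its support (t resp. t - 1 cells), and a server with
   |S| = d + 1 also stores the parity of its support.  To retrieve x_i, use every
   server except the parity servers whose support contains i: a server not
   covering i stores x_i, and a server (j, S) with |S| = d and i = j + s is
   paired with the parity server (j, {s} u S^c), whose support meets j + S in
   i alone, so its parity minus x_l for the other l of its support (all stored
   on (j, S)) gives x_i.  Since |S| + |{s} u S^c| = 2d + 1, the partner
   determines S, so the recovery sets are disjoint.  Out of
   m = (t+d) (C(2d,d) + C(2d,d+1)) servers at most (d+1) C(2d,d+1) = d C(2d,d)
   are excluded, which gives the rate ((2d+1)t + d^2) / ((t+d)(2d+1)). *)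

Section PIRCodes.
Variables (F : fieldType) (t m p : nat) (C : array_code F t m p).

Lemma cell_sub_cols_span (S : {set 'I_m}) r j :
  j \in S -> (C r j <= cols_span C S)%MS.
Proof.
move=> jS; apply: (sumsmx_sup j) => //; apply: (sumsmx_sup r) => //.
by rewrite genmxE.
Qed.

Lemma kPIR_of_recovery_sets (X : finType) (U : 'I_p -> {set X})
    (R : 'I_p -> X -> {set 'I_m}) k :
  (forall i, k <= #|U i|) ->
  (forall i, {in U i &, forall x y, x != y -> [disjoint R i x & R i y]}) ->
  (forall i, {in U i, forall x, (basis_vec F i <= cols_span C (R i x))%MS}) ->
  is_kPIR k C.
Proof.
move=> k_le R_disj R_span i.
exists (fun a => R i (enum_val (widen_ord (k_le i) a))); split=> [a b ab|a].
  apply: R_disj; rewrite ?enum_valP //; apply: contra ab => /eqP/enum_val_inj.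
  by move/(congr1 val) => /= /val_inj ->.
exact/R_span/enum_valP.
Qed.

Lemma kPIR_leq_servers k : 0 < p -> is_kPIR k C -> k <= m.
Proof.
move=> p_gt0 /(_ (Ordinal p_gt0)) [S [S_disj S_span]].
have S_nonempty a : exists j, j \in S a.
  have [S0|[j ja]] := set_0Vmem (S a); last by exists j.
  move: (S_span a).
  rewrite S0 /cols_span big_set0 submx0 => /eqP/matrixP/(_ ord0 (Ordinal p_gt0)).
  by rewrite !mxE eqxx => /eqP; rewrite oner_eq0.
case: k S S_disj S_span S_nonempty => // k S S_disj _ S_nonempty.
have [j0 _] := S_nonempty ord0.
pose f a := odflt j0 [pick j in S a].
have f_in a : f a \in S a.
  rewrite /f; case: pickP => [//|none].
  by have [j ja] := S_nonempty a; rewrite none in ja.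
have f_inj : injective f.
  move=> a b fab; apply/eqP; apply: contraT => ab.
  by move: (disjointFr (S_disj a b ab) (f_in a)); rewrite fab f_in.
by have := leq_card f f_inj; rewrite !card_ord.
Qed.

End PIRCodes.

Lemma rate_le_gPIR (R : realType) (s : rat) (F : finFieldType) t m p k
    (C : array_code F t m p) :
  (p%:Q = s * t%:Q)%R -> 0 < p -> is_kPIR k C -> (k%:R / m%:R <= gPIR R s t)%R.
Proof.
move=> p_eq p_gt0 C_PIR; apply: ub_le_sup; last by exists F, p, m, k, C.
exists 1%R => _ [F' [p' [m' [k' [C' [p'_eq [C'_PIR ->]]]]]]].
have p'_gt0 : 0 < p' by move: p'_eq; rewrite -p_eq => /eqP; rewrite eqr_nat => /eqP ->.
have k'_le := kPIR_leq_servers p'_gt0 C'_PIR.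
have [->|m'_gt0] := posnP m'; first by rewrite invr0 mulr0.
by rewrite ler_pdivrMr ?mul1r ?ler_nat // ltr0n.
Qed.

Lemma setIUC_card (T : finType) (A B : {set T}) :
  #|A| + #|B| = #|T| + #|A :&: B| -> A = (A :&: B) :|: ~: B.
Proof.
move=> card_AB; have /setP AUB : A :|: B = [set: T].
  by apply/eqP; rewrite eqEcard finset.subsetT cardsT; have := cardsUI A B; lia.
apply/setP => x; move: (AUB x); rewrite !inE.
by case: (x \in A); case: (x \in B).
Qed.

Lemma card_sized_sets (T : finType) k :
  #|{: {S : {set T} | #|S| == k}}| = 'C(#|T|, k).
Proof. by rewrite card_sig -card_draws; apply: eq_card => S; rewrite !inE. Qed.

Section CyclicShift.
Variable n : nat.

Definition shift (j : 'I_n) (s : nat) : 'I_n :=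
  Ordinal (ltn_pmod (j + s) (leq_ltn_trans (leq0n j) (ltn_ord j))).

Definition unshift (i : 'I_n) (s : nat) : 'I_n :=
  Ordinal (ltn_pmod (i + (n - s %% n)) (leq_ltn_trans (leq0n i) (ltn_ord i))).

Lemma shiftK s : cancel (shift ^~ s) (unshift ^~ s).
Proof.
move=> j; apply: val_inj; rewrite /= modnDml.
have n_gt0 : 0 < n := leq_ltn_trans (leq0n j) (ltn_ord j).
have -> : j + s + (n - s %% n) = j + (s %/ n).+1 * n.
  by have := divn_eq s n; have := ltn_pmod s n_gt0; lia.
by rewrite addnC modnMDl modn_small.
Qed.

Lemma shift_inj j s1 s2 : s1 < n -> s2 < n -> shift j s1 = shift j s2 -> s1 = s2.
Proof.
move=> lt_s1 lt_s2 /(congr1 val) /= /eqP.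
by rewrite eqn_modDl !modn_small // => /eqP.
Qed.

End CyclicShift.

Section Construction.
Variables t d : nat.
Hypothesis d_le_t : d <= t.

Definition Aset := {S : {set 'I_(d + d)} | #|S| == d}.
Definition Bset := {S : {set 'I_(d + d)} | #|S| == d.+1}.
Definition server := ('I_(t + d) * (Aset + Bset))%type.

Definition pattern (x : server) : {set 'I_(d + d)} :=
  match x.2 with inl A => val A | inr B => val B end.

Definition has_parity (x : server) : bool := if x.2 is inr _ then true else false.

Definition window (j : 'I_(t + d)) (s : 'I_(d + d)) : 'I_(t + d) := shift j s.

Definition support (x : server) : {set 'I_(t + d)} := window x.1 @: pattern x.

(* [~: support x] has t elements, or t - 1 for a parity server, whose parity
   therefore sits in the last cell. *)
Definition pir_code : array_code 'F_2 t #|{: server}| (t + d) := fun r k =>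
  let x := enum_val k in let outside := enum (~: support x) in
  if r < size outside then basis_vec 'F_2 (nth x.1 outside r)
  else (\sum_(l in support x) basis_vec 'F_2 l)%R.

Lemma window_inj j : injective (window j).
Proof.
move=> s1 s2 /shift_inj e; apply/val_inj/e; rewrite (leq_trans (ltn_ord _)) //.
all: by rewrite leq_add2r.
Qed.

Lemma card_support x : #|support x| = if has_parity x then d.+1 else d.
Proof.
rewrite card_imset; last exact: window_inj.
by case: x => j [A|B]; apply/eqP; [exact: (valP A) | exact: (valP B)].
Qed.

Lemma unit_sub_span x (S : {set 'I_#|{: server}|}) l :
  enum_rank x \in S -> l \notin support x ->
  (basis_vec 'F_2 l <= cols_span pir_code S)%MS.
Proof.
move=> xS l_out; have l_in : l \in enum (~: support x) by rewrite mem_enum inE.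
have r_lt : index l (enum (~: support x)) < t.
  have := index_mem l (enum (~: support x)); rewrite l_in -cardE.
  by have := cardsC (support x); rewrite card_ord card_support; case: has_parity; lia.
have := cell_sub_cols_span pir_code (Ordinal r_lt) xS.
by rewrite {1}/pir_code enum_rankK /= index_mem l_in nth_index.
Qed.

Hypothesis t_gt0 : 0 < t.

Lemma parity_sub_span x (S : {set 'I_#|{: server}|}) :
  enum_rank x \in S -> has_parity x ->
  ((\sum_(l in support x) basis_vec 'F_2 l)%R <= cols_span pir_code S)%MS.
Proof.
move=> xS x_par; have r_lt : t.-1 < t by lia.
have card_out : #|~: support x| = t.-1.
  by have := cardsC (support x); rewrite card_ord card_support x_par; lia.
have := cell_sub_cols_span pir_code (Ordinal r_lt) xS.
by rewrite {1}/pir_code enum_rankK /= -cardE card_out ltnn.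
Qed.

Definition mated (i : 'I_(t + d)) (x y : server) : bool :=
  [&& ~~ has_parity x, has_parity y, x.1 == y.1 & support x :&: support y == [set i]].

Lemma mated_parity i x y : mated i x y -> has_parity y && (i \in support y).
Proof. by case/and4P => _ -> _ /eqP/setP/(_ i); rewrite !inE eqxx => /andP []. Qed.

Lemma support_meet j (A : Aset) (B : Bset) :
  support (j, inl A) :&: support (j, inr B) = window j @: (val A :&: val B).
Proof. by rewrite imsetI // => s1 s2 _ _ /window_inj. Qed.

Lemma mate_exists i x : ~~ has_parity x -> i \in support x -> exists y, mated i x y.
Proof.
case: x => j [A|//] _ /imsetP [s sA ->].
have card_B : #|s |: ~: val A| == d.+1.
  apply/eqP; move: (cardsC (val A)).
  by rewrite cardsU1 !inE sA card_ord (eqP (valP A)) /= => /addnI ->.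
exists (j, inr (exist (fun S : {set _} => #|S| == d.+1) _ card_B)).
rewrite /mated eqxx /= support_meet /=.
have -> : val A :&: (s |: ~: val A) = [set s].
  by apply/setP => z; rewrite !inE; case: eqP => [->|]; rewrite ?sA ?andbN.
by rewrite imset_set1.
Qed.

Lemma mate_unique i x x' y : mated i x y -> mated i x' y -> x = x'.
Proof.
case: x x' y => [j [A|//]] [j' [A'|//]] [j'' [//|B]].
case/and4P => _ _ /eqP /= <- /eqP meet /and4P [_ _ /eqP /= -> /eqP meet'].
rewrite support_meet in meet; rewrite support_meet in meet'.
have I_eq : val A' :&: val B = val A :&: val B.
  by apply: (imset_inj (@window_inj j)); rewrite meet meet'.
have card_I : #|val A :&: val B| = 1.
  by rewrite -(card_imset _ (@window_inj j)) meet cards1.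
have det (C : Aset) : val C :&: val B = val A :&: val B ->
    val C = (val A :&: val B) :|: ~: val B.
  move=> CB; rewrite -CB; apply: setIUC_card.
  by rewrite CB card_I card_ord (eqP (valP C)) (eqP (valP B)); lia.
by congr (_, inl _); apply: val_inj; rewrite (det A) // (det A').
Qed.

Definition usable i : {set server} := [set x | ~~ (has_parity x && (i \in support x))].

Definition recovery i x : {set 'I_#|{: server}|} :=
  enum_rank @: [set y | (y == x) || mated i x y].

Lemma recovery_disjoint i :
  {in usable i &, forall x x', x != x' -> [disjoint recovery i x & recovery i x']}.
Proof.
move=> x x'; rewrite !inE => x_us x'_us xx'.
rewrite -setI_eq0 -imsetI; last by move=> ? ? _ _; exact: enum_rank_inj.
rewrite imset_eq0; apply/eqP/setP => y; rewrite !inE; apply/negP.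
case/andP => /orP [/eqP yx | xy] /orP [/eqP yx' | x'y].
- by move: xx'; rewrite -yx -yx' eqxx.
- by move: x_us; rewrite -yx (mated_parity x'y).
- by move: x'_us; rewrite -yx' (mated_parity xy).
- by move: xx'; rewrite (mate_unique xy x'y) eqxx.
Qed.

Lemma recovery_span i :
  {in usable i, forall x, (basis_vec 'F_2 i <= cols_span pir_code (recovery i x))%MS}.
Proof.
move=> x; rewrite inE => x_us.
have x_in : enum_rank x \in recovery i x by rewrite imset_f // inE eqxx.
have [i_x|i_out] := boolP (i \in support x); last exact: unit_sub_span x_in i_out.
have x_np : ~~ has_parity x by apply: contra x_us => ->.
have [y xy] := mate_exists x_np i_x.
have y_in : enum_rank y \in recovery i x by rewrite imset_f // inE xy orbT.
have /andP [y_par i_y] := mated_parity xy.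
case/and4P: xy => _ _ _ /eqP /setP meet.
have -> : basis_vec 'F_2 i = (\sum_(l in support y) basis_vec 'F_2 l
    - \sum_(l in support y | l != i) basis_vec 'F_2 l)%R.
  by rewrite (bigD1 i) //= addrK.
apply: addmx_sub; first exact: parity_sub_span.
rewrite eqmx_opp; apply: summx_sub => l /andP [l_y l_i]; apply: unit_sub_span x_in _.
by apply: contra l_i => l_x; move: (meet l); rewrite !inE l_x l_y => <-.
Qed.

Lemma card_parity_pairs :
  #|[set p : Bset * 'I_(d + d) | p.2 \in val p.1]| = #|{: Bset}| * d.+1.
Proof.
rewrite -sum1_card.
rewrite (eq_bigl (fun p : Bset * 'I_(d + d) => xpredT p.1 && (p.2 \in val p.1)));
  last by move=> p; rewrite !inE.
have -> : \sum_(p : Bset * 'I_(d + d) | xpredT p.1 && (p.2 \in val p.1)) 1 =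
    \sum_(B : Bset) \sum_(s | s \in val B) 1 by rewrite pair_big_dep.
under eq_bigr => B _ do rewrite sum1_card (eqP (valP B)).
by rewrite sum_nat_const.
Qed.

Lemma card_unusable i : #|~: usable i| <= #|{: Bset}| * d.+1.
Proof.
rewrite -card_parity_pairs.
pose f (p : Bset * 'I_(d + d)) : server := (unshift i p.2, inr p.1).
apply: leq_trans (leq_imset_card f _); apply: subset_leq_card; apply/fintype.subsetP.
case=> j [A|B]; rewrite !inE negbK //= => /imsetP [s sB i_eq].
by apply/imsetP; exists (B, s); rewrite ?inE // /f i_eq /= shiftK.
Qed.

Lemma pir_code_kPIR : is_kPIR (#|{: server}| - #|{: Bset}| * d.+1) pir_code.
Proof.
apply: kPIR_of_recovery_sets (@recovery_disjoint) (@recovery_span) => i.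
by rewrite -(cardsC (usable i)); have := card_unusable i; lia.
Qed.

Lemma card_server : #|{: server}| = (t + d) * ('C(d + d, d) + 'C(d + d, d.+1)).
Proof. by rewrite card_prod card_sum !card_sized_sets !card_ord. Qed.

Lemma pir_code_rate :
  (#|{: server}| - #|{: Bset}| * d.+1) * ((t + d) * (2 * d + 1))
  = ((2 * d + 1) * t + d ^ 2) * #|{: server}|.
Proof.
rewrite card_server card_sized_sets card_ord.
have := mul_bin_left (d + d) d; rewrite addnK.
by move: 'C(d + d, d) 'C(d + d, d.+1) => X Y; nia.
Qed.

End Construction.

Local Open Scope ring_scope.

Theorem theorem6 (R : realType) (t d : nat) :
  (1 < t)%N -> (1 <= d <= t)%N ->
  ((2 * d + 1) * t + d ^ 2)%:R / ((t + d) * (2 * d + 1))%:R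
    <= gPIR R (1 + d%:Q / t%:Q) t.
Proof.
move=> t_gt1 /andP [_ d_le_t]; have t_gt0 : (0 < t)%N by apply: ltnW.
have p_eq : (t + d)%:Q = (1 + d%:Q / t%:Q) * t%:Q.
  by rewrite mulrDl mul1r divfK ?PoszD ?intrD // intr_eq0 eqz_nat -lt0n.
have code_PIR := pir_code_kPIR d_le_t t_gt0.
apply: le_trans (rate_le_gPIR R p_eq (ltn_addr d t_gt0) code_PIR).
have m_gt0 : (0 < #|{: server t d}|)%N.
  by rewrite card_server muln_gt0 addn_gt0 t_gt0 addn_gt0 bin_gt0 leq_addl.
have n_gt0 : (0 < (t + d) * (2 * d + 1))%N by rewrite muln_gt0 !addn_gt0 t_gt0 orbT.
rewrite ler_pdivrMr ?ltr0n // mulrAC ler_pdivlMr ?ltr0n //.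
by rewrite -!natrM ler_nat pir_code_rate.
Qed.
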